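(* Let $(E;\oplus,0)$ be a generalized effect algebra. If $E$ is monotone Dedekind upwards $\sigma$-complete, then $E$ is monotone Dedekind downwards $\sigma$-complete. If $E$ is upwards directed, then $E$ is monotone Dedekind upwards $\sigma$-complete if and only if $E$ is monotone Dedekind downwards $\sigma$-complete.
   Context: A generalized effect algebra is a structure $(E;\oplus,0)$ with $0\in E$ and a partial binary operation $\oplus$ such that for all $x,y,z\in E$: $x\oplus y=y\oplus x$ if one side is defined; $(x\oplus y)\oplus z=x\oplus(y\oplus z)$ if one side is defined; $x\oplus0=x$; $x\oplus y=x\oplus z$ implies $y=z$; $x\oplus y=0$ implies $x=y=0$. The induced partial order is $x\le y$ iff $x\oplus z=y$ for some $z\in E$. $E$ is monotone Dedekind upwards $\sigma$-complete if every sequence $x_1\le x_2\le\cdots$ that has an upper bound in $E$ has a supremum $\bigvee_n x_n$ in $E$; monotone Dedekind downwards $\sigma$-complete if every sequence $x_1\ge x_2\ge\cdots$ has an infimum $\bigwedge_n x_n$ in $E$; upwards directed if any two elements of $E$ have a common upper bound in $E$. *)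

(* Generalized effect algebras with a partial operation
   encoded as  op : E -> E -> option E  (None = undefined). *)

Section GEA.
Context {E : Type} (op : E -> E -> option E) (zero : E).


Definition is_GEA : Prop :=
  (forall x y, op x y = op y x) /\
  (forall x y z xy s, op x y = Some xy -> op xy z = Some s ->
       exists yz, op y z = Some yz /\ op x yz = Some s) /\
  (forall x y z yz s, op y z = Some yz -> op x yz = Some s ->
       exists xy, op x y = Some xy /\ op xy z = Some s) /\
  (forall x, op x zero = Some x) /\
  (forall x y z s, op x y = Some s -> op x z = Some s -> y = z) /\
  (forall x y, op x y = Some zero -> x = zero /\ y = zero).

Definition gle (x y : E) : Prop := exists z, op x z = Some y.

Definition is_upper_bound (s : nat -> E) (b : E) : Prop :=
  forall n, gle (s n) b.
Definition is_lower_bound (s : nat -> E) (b : E) : Prop :=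
  forall n, gle b (s n).

Definition is_sup (s : nat -> E) (a : E) : Prop :=
  is_upper_bound s a /\ forall b, is_upper_bound s b -> gle a b.
Definition is_inf (s : nat -> E) (a : E) : Prop :=
  is_lower_bound s a /\ forall b, is_lower_bound s b -> gle b a.

Definition mono_dedekind_up_sigma : Prop :=
  forall s : nat -> E, (forall n, gle (s n) (s (S n))) ->
    (exists b, is_upper_bound s b) -> exists a, is_sup s a.

Definition mono_dedekind_down_sigma : Prop :=
  forall s : nat -> E, (forall n, gle (s (S n)) (s n)) ->
    exists a, is_inf s a.

Definition upwards_directed : Prop :=
  forall x y, exists z, gle x z /\ gle y z.

End GEA.

(* Fix w and let x ↦ w ⊖ x be complementation inside the interval [0, w].
   By cancellation and associativity it is an order-reversing involution of
   [0, w], so it turns an increasing sequence below w into a decreasing one,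
   and the supremum of one into the infimum of the other, as long as only
   bounds below w are considered.  For a decreasing sequence every lower bound
   lies below s 0, so upwards completeness gives genuine infima.  Conversely
   an infimum only yields a supremum relative to one upper bound w;
   directedness makes the relative suprema for two upper bounds comparable
   via a common upper bound, hence all equal to a genuine supremum. *)

From Stdlib Require Import ClassicalEpsilon.

Section GeneralizedEffectAlgebra.
Context {E : Type} (op : E -> E -> option E) (zero : E).
Hypothesis HE : is_GEA op zero.

Let opC x y : op x y = op y x.
Proof. exact (proj1 HE x y). Qed.

Let opA x y z xy s : op x y = Some xy -> op xy z = Some s ->
  exists yz, op y z = Some yz /\ op x yz = Some s.
Proof. exact (proj1 (proj2 HE) x y z xy s). Qed.

Let op0 x : op x zero = Some x.
Proof. exact (proj1 (proj2 (proj2 (proj2 HE))) x). Qed.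

Let op_cancel x y z s : op x y = Some s -> op x z = Some s -> y = z.
Proof. exact (proj1 (proj2 (proj2 (proj2 (proj2 HE)))) x y z s). Qed.

Lemma gle_refl x : gle op x x.
Proof. exists zero; apply op0. Qed.

Lemma gle_trans x y z : gle op x y -> gle op y z -> gle op x z.
Proof.
  intros [a Ha] [b Hb].
  destruct (opA _ _ _ _ _ Ha Hb) as [ab [_ Hab]].
  now exists ab.
Qed.

Lemma op_complement_split x y w f p q :
  op x f = Some y -> op y p = Some w -> op x q = Some w -> op f p = Some q.
Proof.
  intros Hf Hp Hq.
  destruct (opA _ _ _ _ _ Hf Hp) as [fp [Hfp Hxfp]].
  now rewrite (op_cancel _ _ _ _ Hq Hxfp).
Qed.

Lemma complement_antitone w x y cx cy :
  op x cx = Some w -> op y cy = Some w -> gle op x y -> gle op cy cx.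
Proof.
  intros Hx Hy [f Hf].
  exists f; rewrite opC.
  exact (op_complement_split _ _ _ _ _ _ Hf Hy Hx).
Qed.

Lemma complement_le_iff w x y cx cy :
  op x cx = Some w -> op y cy = Some w -> gle op x y <-> gle op cy cx.
Proof.
  intros Hx Hy; split; [exact (complement_antitone _ _ _ _ _ Hx Hy)|].
  rewrite opC in Hx; rewrite opC in Hy.
  exact (complement_antitone _ _ _ _ _ Hy Hx).
Qed.

Lemma complement_exists w x : gle op x w -> exists cx, op cx x = Some w.
Proof. intros [cx Hcx]; exists cx; now rewrite opC. Qed.

Lemma complement_seq_exists w (s : nat -> E) :
  is_upper_bound op s w -> exists t, forall n, op (s n) (t n) = Some w.
Proof. exact (choice (fun n c => op (s n) c = Some w)). Qed.

Definition is_sup_below (w : E) (s : nat -> E) (a : E) : Prop :=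
  is_upper_bound op s a /\
  forall c, is_upper_bound op s c -> gle op c w -> gle op a c.

Section Complements.
Variables (w : E) (s t : nat -> E).
Hypothesis Hst : forall n, op (s n) (t n) = Some w.

Lemma complement_seq_increasing :
  (forall n, gle op (s (S n)) (s n)) -> forall n, gle op (t n) (t (S n)).
Proof. intros Hs n; exact (complement_antitone _ _ _ _ _ (Hst _) (Hst _) (Hs n)). Qed.

Lemma complement_seq_decreasing :
  (forall n, gle op (s n) (s (S n))) -> forall n, gle op (t (S n)) (t n).
Proof. intros Hs n; exact (complement_antitone _ _ _ _ _ (Hst _) (Hst _) (Hs n)). Qed.

Lemma complement_upper_bound_iff b cb : op b cb = Some w ->
  is_upper_bound op s b <-> is_lower_bound op t cb.
Proof.
  intros Hb; split; intros H n; now apply (complement_le_iff _ _ _ _ _ (Hst n) Hb).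
Qed.

Lemma complement_lower_bound_iff b cb : op b cb = Some w ->
  is_lower_bound op s b <-> is_upper_bound op t cb.
Proof.
  intros Hb; split; intros H n; now apply (complement_le_iff _ _ _ _ _ Hb (Hst n)).
Qed.

Lemma complement_sup_is_inf d a :
  is_sup op t d -> op a d = Some w ->
  (forall b, is_lower_bound op s b -> gle op b w) -> is_inf op s a.
Proof.
  intros [Hd Hdmin] Ha Hbelow; split.
  - now apply (complement_lower_bound_iff _ _ Ha).
  - intros b Hb.
    destruct (complement_exists _ _ (Hbelow b Hb)) as [cb Hcb]; rewrite opC in Hcb.
    apply (complement_le_iff _ _ _ _ _ Hcb Ha), Hdmin.
    now apply (complement_lower_bound_iff _ _ Hcb).
Qed.

Lemma complement_inf_is_sup_below d a :
  is_inf op t d -> op a d = Some w -> is_sup_below w s a.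
Proof.
  intros [Hd Hdmax] Ha; split.
  - now apply (complement_upper_bound_iff _ _ Ha).
  - intros c Hc Hcw.
    destruct (complement_exists _ _ Hcw) as [cc Hcc]; rewrite opC in Hcc.
    apply (complement_le_iff _ _ _ _ _ Ha Hcc), Hdmax.
    now apply (complement_upper_bound_iff _ _ Hcc).
Qed.

End Complements.

Lemma decreasing_le_head (s : nat -> E) :
  (forall n, gle op (s (S n)) (s n)) -> is_upper_bound op s (s 0).
Proof.
  intros Hs n; induction n as [|n IH]; [exact (gle_refl _)|].
  exact (gle_trans _ _ _ (Hs n) IH).
Qed.

Lemma up_sigma_down_sigma :
  mono_dedekind_up_sigma op -> mono_dedekind_down_sigma op.
Proof.
  intros Up s Hs.
  pose proof (decreasing_le_head s Hs) as Hs0.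
  destruct (complement_seq_exists _ _ Hs0) as [t Hst].
  destruct (Up t (complement_seq_increasing _ _ _ Hst Hs)) as [d Hd].
  { exists (s 0); intro n; exists (s n); now rewrite opC. }
  assert (Hd0 : gle op d (s 0)).
  { apply (proj2 Hd); intro n; exists (s n); now rewrite opC. }
  destruct (complement_exists _ _ Hd0) as [a Ha].
  exists a; apply (complement_sup_is_inf _ _ _ Hst d); [exact Hd|exact Ha|].
  intros b Hb; exact (Hb 0).
Qed.

Lemma down_sigma_sup_below : mono_dedekind_down_sigma op ->
  forall s w, (forall n, gle op (s n) (s (S n))) -> is_upper_bound op s w ->
  exists a, is_sup_below w s a.
Proof.
  intros Down s w Hs Hw.
  destruct (complement_seq_exists _ _ Hw) as [t Hst].
  destruct (Down t (complement_seq_decreasing _ _ _ Hst Hs)) as [d Hd].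
  assert (Hdw : gle op d w).
  { apply (gle_trans _ (t 0)); [exact (proj1 Hd 0)|].
    exists (s 0); now rewrite opC. }
  destruct (complement_exists _ _ Hdw) as [a Ha].
  exists a; exact (complement_inf_is_sup_below _ _ _ Hst _ _ Hd Ha).
Qed.

Lemma down_sigma_up_sigma : upwards_directed op ->
  mono_dedekind_down_sigma op -> mono_dedekind_up_sigma op.
Proof.
  intros Dir Down s Hs [w Hw].
  destruct (down_sigma_sup_below Down s w Hs Hw) as [a [Ha Hamin]].
  exists a; split; [exact Ha|]; intros c Hc.
  destruct (Dir w c) as [z [Hwz Hcz]].
  assert (Hz : is_upper_bound op s z)
    by (intro n; exact (gle_trans _ _ _ (Hw n) Hwz)).
  destruct (down_sigma_sup_below Down s z Hs Hz) as [a' [Ha' Ha'min]].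
  apply (gle_trans _ a').
  - apply Hamin; [exact Ha'|].
    apply Ha'min; assumption.
  - apply Ha'min; assumption.
Qed.

End GeneralizedEffectAlgebra.

Theorem lemma5p1 (E : Type) (op : E -> E -> option E) (zero : E)
  (HE : is_GEA op zero) :
  (mono_dedekind_up_sigma op -> mono_dedekind_down_sigma op) /\
  (upwards_directed op ->
     (mono_dedekind_up_sigma op <-> mono_dedekind_down_sigma op)).
Proof.
  split; [exact (up_sigma_down_sigma op zero HE)|].
  intros Dir; split; [exact (up_sigma_down_sigma op zero HE)|].
  exact (down_sigma_up_sigma op zero HE Dir).
Qed.
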